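(* Let $\psi:\mathbb{R}_{\geq 0}\to\mathbb{R}$ be a neighbor function. Then for any $x,y,t$ with $0\leq x<y$ and $t\geq 0$: (1) $\psi^{-1}$ exists and is increasing; (2) $|\psi(y+t)-\psi(x+t)|\leq|\psi(y)-\psi(x)|$; (3) $|I_{\psi,t}(y)|\geq|I_{\psi,t}(x)|$; (4) $\dfrac{|I_{\psi,t}(y)|}{y}\leq\dfrac{|I_{\psi,t}(x)|}{x}$.
   Context: A neighbor function is a function $\psi:\mathbb{R}_{\geq 0}\to\mathbb{R}$ that is (i) strictly increasing, (ii) continuous, (iii) concave, and (iv) such that $g(x)=\psi(e^{x})$ is convex as a function of $x\in\mathbb{R}$. For a neighbor function $\psi$, a number $\sigma\geq 0$ and $y\geq 0$, the uncertainty interval around $y$ is $I_{\psi,\sigma}(y)=[L,U]$ with $L=\psi^{-1}\big(\max(\psi(0),\psi(y)-\sigma)\big)$ and $U=\psi^{-1}\big(\psi(y)+\sigma\big)$; its length is $|I_{\psi,\sigma}(y)|=U-L$. *)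

From Stdlib Require Import Reals Lra ClassicalEpsilon.
Open Scope R_scope.

(* psi : R -> R is only considered on the domain [0, +oo). *)

Definition strictly_increasing_nonneg (psi : R -> R) : Prop :=
  forall x y, 0 <= x -> x < y -> psi x < psi y.

Definition continuous_nonneg (psi : R -> R) : Prop :=
  forall x, 0 <= x -> forall eps, 0 < eps ->
    exists delta, 0 < delta /\
      forall y, 0 <= y -> Rabs (y - x) < delta -> Rabs (psi y - psi x) < eps.

Definition concave_nonneg (psi : R -> R) : Prop :=
  forall x y l, 0 <= x -> 0 <= y -> 0 <= l <= 1 ->
    l * psi x + (1 - l) * psi y <= psi (l * x + (1 - l) * y).

Definition convex_R (g : R -> R) : Prop :=
  forall a b l, 0 <= l <= 1 ->
    g (l * a + (1 - l) * b) <= l * g a + (1 - l) * g b.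

Definition neighbor_function (psi : R -> R) : Prop :=
  strictly_increasing_nonneg psi /\ continuous_nonneg psi /\
  concave_nonneg psi /\ convex_R (fun x => psi (exp x)).

(* psi^{-1}(v): a (the, when it exists) x >= 0 with psi x = v. *)
Definition psi_inv (psi : R -> R) (v : R) : R :=
  epsilon (inhabits 0) (fun x => 0 <= x /\ psi x = v).

Definition I_low (psi : R -> R) (sigma y : R) : R :=
  psi_inv psi (Rmax (psi 0) (psi y - sigma)).
Definition I_up (psi : R -> R) (sigma y : R) : R :=
  psi_inv psi (psi y + sigma).
Definition I_len (psi : R -> R) (sigma y : R) : R :=
  I_up psi sigma y - I_low psi sigma y.

(* Concavity of psi says that increments of psi over intervals of a fixed
   length shrink as the interval moves right; dually, the increments of
   psi^{-1} over a fixed height grow, which gives (2) and (3).  Convexity of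
   psi o exp says that increments of psi over intervals of a fixed ratio grow
   as the interval moves right, and the same argument on the multiplicative
   scale gives (4).  Convexity of psi o exp also forces psi to be unbounded,
   so by the intermediate value theorem psi maps [0, +oo) onto
   [psi 0, +oo) and psi^{-1} is a genuine inverse there. *)

From Stdlib Require Import Reals Lra ClassicalEpsilon.
Open Scope R_scope.

Lemma convex_increments_le (D : R -> Prop) (f : R -> R) :
  (forall a b l, D a -> D b -> 0 <= l <= 1 ->
     f (l * a + (1 - l) * b) <= l * f a + (1 - l) * f b) ->
  forall A B s, D A -> D (B + s) -> A <= B -> 0 <= s ->
  f (A + s) - f A <= f (B + s) - f B.
Proof.
  intros Hconv A B s DA DBs HAB Hs.
  destruct (Req_dec (B - A + s) 0) as [H0 | H0].
  { replace B with A by lra. replace s with 0 by lra. lra. }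
  (* A + s and B are the convex combinations of A and B + s with weights l and 1 - l *)
  set (l := (B - A) / (B - A + s)).
  assert (Hl : l * (B - A + s) = B - A) by (unfold l; field; lra).
  assert (Hl01 : 0 <= l <= 1) by (split; nra).
  assert (HAs := Hconv A (B + s) l DA DBs Hl01).
  assert (HB := Hconv A (B + s) (1 - l) DA DBs ltac:(lra)).
  replace (l * A + (1 - l) * (B + s)) with (A + s) in HAs by nra.
  replace ((1 - l) * A + (1 - (1 - l)) * (B + s)) with B in HB by nra.
  lra.
Qed.

Lemma convex_secant_le (g : R -> R) :
  convex_R g -> forall s, 1 <= s -> g 0 + s * (g 1 - g 0) <= g s.
Proof.
  intros Hg s Hs.
  assert (Hw : 0 <= / s <= 1).
  { split; [left; apply Rinv_0_lt_compat; lra|].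
    rewrite <- Rinv_1. apply Rinv_le_contravar; lra. }
  assert (H := Hg s 0 (/ s) Hw).
  replace (/ s * s + (1 - / s) * 0) with 1 in H by (field; lra).
  apply Rmult_le_compat_l with (r := s) in H; [|lra].
  replace (s * (/ s * g s + (1 - / s) * g 0)) with (g s + (s - 1) * g 0) in H
    by (field; lra).
  lra.
Qed.

Lemma ln_le x y : 0 < x -> x <= y -> ln x <= ln y.
Proof.
  intros Hx [Hxy | ->]; [left; apply ln_increasing|]; lra.
Qed.

Section NeighborFunction.

Variable psi : R -> R.
Hypothesis Hpsi : neighbor_function psi.

Lemma psi_lt x y : 0 <= x -> x < y -> psi x < psi y.
Proof. apply Hpsi. Qed.

Lemma psi_le x y : 0 <= x -> x <= y -> psi x <= psi y.
Proof. intros Hx [Hxy | ->]; [left; apply psi_lt|]; lra. Qed.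

Lemma psi_le_cancel x y : 0 <= y -> psi x <= psi y -> x <= y.
Proof.
  intros Hy Hpsixy. destruct (Rle_lt_dec x y) as [|Hyx]; [assumption|].
  assert (psi y < psi x) by (apply psi_lt; lra). lra.
Qed.

Lemma psi_increments_le A B s : 0 <= A -> A <= B -> 0 <= s ->
  psi (B + s) - psi B <= psi (A + s) - psi A.
Proof.
  intros HA HAB Hs. destruct Hpsi as (_ & _ & Hconc & _).
  assert (H := convex_increments_le (fun x => 0 <= x) (fun x => - psi x)
    ltac:(intros a b l Ha Hb Hl; specialize (Hconc a b l Ha Hb Hl); lra)
    A B s HA ltac:(lra) HAB Hs).
  lra.
Qed.

Lemma psi_scale_increments_le p q r : 0 < p -> p <= q -> 1 <= r ->
  psi (r * p) - psi p <= psi (r * q) - psi q.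
Proof.
  intros Hp Hpq Hr. destruct Hpsi as (_ & _ & _ & Hg).
  assert (Hlr : 0 <= ln r) by (rewrite <- ln_1; apply ln_le; lra).
  assert (H := convex_increments_le (fun _ => True) (fun x => psi (exp x))
    ltac:(intros a b l _ _ Hl; apply Hg, Hl)
    (ln p) (ln q) (ln r) I I ltac:(apply ln_le; lra) Hlr).
  cbv beta in H. rewrite !exp_plus, !exp_ln in H by lra.
  rewrite (Rmult_comm r p), (Rmult_comm r q). exact H.
Qed.

Lemma psi_unbounded v : exists M, 0 <= M /\ v < psi M.
Proof.
  destruct Hpsi as (_ & _ & _ & Hg).
  set (g := fun x => psi (exp x)) in Hg.
  assert (Hslope : g 0 < g 1).
  { apply psi_lt; [left; apply exp_pos | apply exp_increasing; lra]. }
  set (s := Rmax 1 ((v - g 0) / (g 1 - g 0) + 1)).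
  assert (Hs1 : 1 <= s) by apply Rmax_l.
  assert (Hs2 : (v - g 0) / (g 1 - g 0) + 1 <= s) by apply Rmax_r.
  assert (Hsv : v - g 0 < s * (g 1 - g 0)).
  { replace (v - g 0) with ((v - g 0) / (g 1 - g 0) * (g 1 - g 0)) by (field; lra).
    apply Rmult_lt_compat_r; lra. }
  exists (exp s). split; [left; apply exp_pos|].
  assert (H := convex_secant_le g Hg s Hs1). unfold g in *. lra.
Qed.

(* psi o Rabs is a continuous extension of psi to all of R, so the IVT applies. *)
Lemma psi_surjective v : psi 0 <= v -> exists x, 0 <= x /\ psi x = v.
Proof.
  intros Hv. destruct (Req_dec v (psi 0)) as [-> | Hv0]; [exists 0; lra|].
  destruct (psi_unbounded v) as (M & HM & HvM).
  destruct Hpsi as (_ & Hcont & _).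
  set (F := fun x => psi (Rabs x) - v).
  assert (HF : continuity F).
  { intros x eps Heps.
    destruct (Hcont (Rabs x) (Rabs_pos x) eps Heps) as (d & Hd & Hclose).
    exists d; split; [exact Hd|]. intros y [_ Hy]. simpl in *. unfold R_dist in *.
    unfold F. replace (psi (Rabs y) - v - (psi (Rabs x) - v))
      with (psi (Rabs y) - psi (Rabs x)) by ring.
    apply Hclose; [apply Rabs_pos|].
    eapply Rle_lt_trans; [apply Rabs_triang_inv2 | exact Hy]. }
  assert (HM0 : 0 < M) by (destruct HM as [|<-]; lra).
  destruct (IVT F 0 M HF HM0) as (z & Hz & Fz); unfold F.
  - rewrite Rabs_R0. lra.
  - rewrite Rabs_pos_eq; lra.
  - exists z. unfold F in Fz. rewrite Rabs_pos_eq in Fz; lra.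
Qed.

Lemma psi_inv_spec v : psi 0 <= v ->
  0 <= psi_inv psi v /\ psi (psi_inv psi v) = v.
Proof. intros Hv. unfold psi_inv. apply epsilon_spec, psi_surjective, Hv. Qed.

Lemma psi_inv_psi x : 0 <= x -> psi_inv psi (psi x) = x.
Proof.
  intros Hx.
  destruct (psi_inv_spec (psi x)) as [Hinv0 Hinv]; [apply psi_le; lra|].
  apply Rle_antisym; apply psi_le_cancel; lra.
Qed.

Lemma psi_inv_lt u v : psi 0 <= u -> u < v -> psi_inv psi u < psi_inv psi v.
Proof.
  intros Hu Huv.
  destruct (psi_inv_spec u Hu) as [Hu0 Hu'].
  destruct (psi_inv_spec v ltac:(lra)) as [Hv0 Hv'].
  destruct (Rlt_le_dec (psi_inv psi u) (psi_inv psi v)) as [|Hvu]; [assumption|].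
  assert (psi (psi_inv psi v) <= psi (psi_inv psi u)) by (apply psi_le; lra). lra.
Qed.

Lemma psi_shift_dist_le x y t : 0 <= x -> x < y -> 0 <= t ->
  Rabs (psi (y + t) - psi (x + t)) <= Rabs (psi y - psi x).
Proof.
  intros Hx Hxy Ht.
  assert (Hpsixy : psi x < psi y) by (apply psi_lt; lra).
  assert (Hshift : psi (x + t) <= psi (y + t)) by (apply psi_le; lra).
  assert (H := psi_increments_le x y t Hx ltac:(lra) Ht).
  rewrite !Rabs_right by lra. lra.
Qed.

Lemma I_up_spec t x : 0 <= x -> 0 <= t ->
  0 <= I_up psi t x /\ psi (I_up psi t x) = psi x + t.
Proof.
  intros Hx Ht. apply psi_inv_spec.
  assert (psi 0 <= psi x) by (apply psi_le; lra). lra.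
Qed.

Lemma I_low_spec t x :
  0 <= I_low psi t x /\ psi (I_low psi t x) = Rmax (psi 0) (psi x - t).
Proof. apply psi_inv_spec, Rmax_l. Qed.

Lemma I_low_le t x : 0 <= x -> 0 <= t -> I_low psi t x <= x.
Proof.
  intros Hx Ht. destruct (I_low_spec t x) as [_ HL].
  apply psi_le_cancel; [lra|]. rewrite HL.
  assert (psi 0 <= psi x) by (apply psi_le; lra).
  unfold Rmax; destruct Rle_dec; lra.
Qed.

Lemma I_up_ge t x : 0 <= x -> 0 <= t -> x <= I_up psi t x.
Proof.
  intros Hx Ht. destruct (I_up_spec t x Hx Ht) as [HU0 HU].
  apply psi_le_cancel; lra.
Qed.

Section IntervalComparison.

Variables t x y : R.
Hypotheses (Ht : 0 <= t) (Hx : 0 <= x) (Hxy : x < y).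

Lemma I_up_sub_le : I_up psi t x - x <= I_up psi t y - y.
Proof.
  destruct (I_up_spec t x Hx Ht) as [Ha0 Ha].
  destruct (I_up_spec t y ltac:(lra) Ht) as [Hb0 Hb].
  assert (Hxa := I_up_ge t x Hx Ht).
  set (a := I_up psi t x) in *. set (b := I_up psi t y) in *.
  assert (H := psi_increments_le x y (a - x) Hx ltac:(lra) ltac:(lra)).
  replace (x + (a - x)) with a in H by ring.
  assert (y + (a - x) <= b) by (apply psi_le_cancel; lra).
  lra.
Qed.

Lemma sub_I_low_le : x - I_low psi t x <= y - I_low psi t y.
Proof.
  destruct (I_low_spec t x) as [He0 He].
  destruct (I_low_spec t y) as [Hc0 Hc].
  assert (Hex := I_low_le t x Hx Ht).
  set (e := I_low psi t x) in *. set (c := I_low psi t y) in *.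
  assert (Hpsixy : psi x < psi y) by (apply psi_lt; lra).
  assert (Hec : e <= c).
  { apply psi_le_cancel; [lra|]. rewrite He, Hc.
    unfold Rmax; repeat destruct Rle_dec; lra. }
  assert (Hgain : psi x - psi e <= psi y - psi c).
  { rewrite He, Hc. unfold Rmax; repeat destruct Rle_dec; lra. }
  assert (H := psi_increments_le e c (x - e) He0 Hec ltac:(lra)).
  replace (e + (x - e)) with x in H by ring.
  assert (c + (x - e) <= y) by (apply psi_le_cancel; lra).
  lra.
Qed.

Lemma I_len_le : I_len psi t x <= I_len psi t y.
Proof.
  unfold I_len. assert (H1 := I_up_sub_le). assert (H2 := sub_I_low_le). lra.
Qed.

Hypothesis Hx0 : 0 < x.

Lemma I_up_ratio_le : I_up psi t y * x <= I_up psi t x * y.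
Proof.
  destruct (I_up_spec t x Hx Ht) as [Ha0 Ha].
  destruct (I_up_spec t y ltac:(lra) Ht) as [Hb0 Hb].
  assert (Hxa := I_up_ge t x Hx Ht).
  set (a := I_up psi t x) in *. set (b := I_up psi t y) in *.
  set (r := a / x).
  assert (Hrx : r * x = a) by (unfold r; field; lra).
  assert (Hr1 : 1 <= r) by nra.
  assert (H := psi_scale_increments_le x y r Hx0 ltac:(lra) Hr1).
  rewrite Hrx in H.
  assert (b <= r * y) by (apply psi_le_cancel; nra).
  nra.
Qed.

Lemma I_low_ratio_le : I_low psi t x * y <= I_low psi t y * x.
Proof.
  destruct (I_low_spec t x) as [He0 He].
  destruct (I_low_spec t y) as [Hc0 Hc].
  assert (Hex := I_low_le t x Hx Ht).
  set (e := I_low psi t x) in *. set (c := I_low psi t y) in *.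
  destruct He0 as [He0 | <-]; [|nra].
  assert (Hpe : psi e = psi x - t).
  { assert (psi 0 < psi e) by (apply psi_lt; lra).
    revert He; unfold Rmax; destruct Rle_dec; lra. }
  set (r := x / e). set (q := y * e / x).
  assert (Hre : r * e = x) by (unfold r; field; lra).
  assert (Hrq : r * q = y) by (unfold r, q; field; lra).
  assert (Hqx : q * x = y * e) by (unfold q; field; lra).
  assert (H := psi_scale_increments_le e q r He0 ltac:(nra) ltac:(nra)).
  rewrite Hre, Hrq in H.
  assert (q <= c).
  { apply psi_le_cancel; [lra|]. rewrite Hc.
    assert (psi y - t <= Rmax (psi 0) (psi y - t)) by apply Rmax_r. lra. }
  nra.
Qed.

Lemma I_len_div_le : I_len psi t y / y <= I_len psi t x / x.
Proof.
  assert (HU := I_up_ratio_le). assert (HL := I_low_ratio_le).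
  unfold I_len.
  apply (Rmult_le_reg_r (x * y)); [nra|].
  replace ((I_up psi t y - I_low psi t y) / y * (x * y))
    with (I_up psi t y * x - I_low psi t y * x) by (field; lra).
  replace ((I_up psi t x - I_low psi t x) / x * (x * y))
    with (I_up psi t x * y - I_low psi t x * y) by (field; lra).
  lra.
Qed.

End IntervalComparison.

End NeighborFunction.

Theorem theorem5p3 (psi : R -> R) (Hpsi : neighbor_function psi) :
  (* (1) psi^{-1} exists on [psi 0, +oo) and is increasing *)
  ((forall v, psi 0 <= v -> 0 <= psi_inv psi v /\ psi (psi_inv psi v) = v) /\
   (forall x, 0 <= x -> psi_inv psi (psi x) = x) /\
   (forall u v, psi 0 <= u -> u < v -> psi_inv psi u < psi_inv psi v)) /\
  (forall x y t, 0 <= x -> x < y -> 0 <= t ->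
     (* (2) *)
     Rabs (psi (y + t) - psi (x + t)) <= Rabs (psi y - psi x) /\
     (* (3) *)
     I_len psi t x <= I_len psi t y /\
     (* (4), meaningful only for x > 0 *)
     (0 < x -> I_len psi t y / y <= I_len psi t x / x)).
Proof.
  split.
  - split; [|split].
    + exact (psi_inv_spec psi Hpsi).
    + exact (psi_inv_psi psi Hpsi).
    + exact (psi_inv_lt psi Hpsi).
  - intros x y t Hx Hxy Ht. split; [|split].
    + exact (psi_shift_dist_le psi Hpsi x y t Hx Hxy Ht).
    + exact (I_len_le psi Hpsi t x y Ht Hx Hxy).
    + exact (I_len_div_le psi Hpsi t x y Ht Hx Hxy).
Qed.
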